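(* Let $\mathcal{A}=(S,\mathcal{P}_1,\dots,\mathcal{P}_n)$ be an Aumann structure and let $\mathbf{C}(\mathcal{A})=(\mathcal{P}(S),\sqsubseteq,(K_i)_{i\in\{1,\dots,n\}})$ be its induced spatial constraint system, with distributed spaces $(\Delta_I)_{I\subseteq\{1,\dots,n\}}$. Then $\Delta_I=D_I$ for every $I\subseteq\{1,\dots,n\}$.
   Context: An Aumann structure $(S,\mathcal{P}_1,\dots,\mathcal{P}_n)$ consists of a set $S$ of states and, for each agent $i$, a partition $\mathcal{P}_i$ of $S$; $\mathcal{P}_i(s)$ denotes the block of $\mathcal{P}_i$ containing $s$. Events are subsets of $S$. Define $K_i(e)=\{s\in S: \mathcal{P}_i(s)\subseteq e\}$ and $D_I(e)=\{s\in S : \bigcap_{i\in I}\mathcal{P}_i(s)\subseteq e\}$ (with the intersection over the empty family taken to be $S$). The induced structure $\mathbf{C}(\mathcal{A})$ has constraints $\mathcal{P}(S)$ ordered by $e_1\sqsubseteq e_2$ iff $e_2\subseteq e_1$ (so join is intersection, bottom is $S$, top is $\emptyset$), and agent $i$'s function is $K_i$. In a complete lattice $(\mathrm{Con},\sqsubseteq)$ a space function is a self-map preserving joins of directed sets, binary joins and the bottom; for a family of space functions $(s_i)_{i\in G}$, the distributed space of $I\subseteq G$ is $\Delta_I=\max\{f \text{ space function}: f(c)\sqsubseteq s_i(c) \text{ for all } c \text{ and all } i\in I\}$ (this maximum exists). *)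

From mathcomp Require Import all_boot.
From mathcomp Require Import boolp classical_sets.
Set Implicit Arguments. Unset Strict Implicit. Unset Printing Implicit Defensive.
Local Open Scope classical_set_scope.

(* A partition of the state type S, presented by the map s |-> P(s)
   (the block containing s): every state lies in its block, and any
   state of a block has that same block.  The blocks {P s | s} then form
   exactly a partition of S. *)
Definition is_partition_fun (S : Type) (P : S -> set S) : Prop :=
  (forall s, P s s) /\ (forall s t, P s t -> P t = P s).

Definition Kop (S : Type) (P : S -> set S) (e : set S) : set S :=
  [set s | P s `<=` e].

(* Distributed knowledge D_I(e) = {s | ⋂_{i∈I} P_i(s) ⊆ e}
   (empty intersection = S). *)
Definition Dop (S : Type) (n : nat) (P : 'I_n -> S -> set S) (I : set 'I_n)
  (e : set S) : set S :=
  [set s | \bigcap_(i in I) P i s `<=` e].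

Definition sqle (S : Type) (e1 e2 : set S) : Prop := e2 `<=` e1.

Definition directed (S : Type) (D : set (set S)) : Prop :=
  (exists d, D d) /\
  (forall a b, D a -> D b -> exists2 c, D c & sqle a c /\ sqle b c).

(* Space function on (P(S), ⊑): joins are intersections, bottom is S. *)
Definition space_function (S : Type) (f : set S -> set S) : Prop :=
  (forall D : set (set S), directed D ->
     f (\bigcap_(d in D) d) = \bigcap_(d in D) f d) /\
  (forall a b, f (a `&` b) = f a `&` f b) /\
  f setT = setT.

Definition is_distributed_space (S : Type) (n : nat)
  (s : 'I_n -> set S -> set S) (I : set 'I_n) (f : set S -> set S) : Prop :=
  [/\ space_function f,
      (forall c i, I i -> sqle (f c) (s i c)) &
      (forall g, space_function g ->
         (forall c i, I i -> sqle (g c) (s i c)) ->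
         forall c, sqle (g c) (f c))].

From mathcomp Require Import all_boot.
From mathcomp Require Import boolp classical_sets.
Set Implicit Arguments.
Unset Strict Implicit.
Unset Printing Implicit Defensive.
Local Open Scope classical_set_scope.

(* Proof idea: D_I, like every K_i, is a "box" operator e |-> {s | R s ⊆ e},
   and box operators preserve arbitrary intersections, so D_I is a space
   function below each K_i (i ∈ I).  For maximality, a space function g is
   determined by its values on the co-singletons S \ {t}: writing c as the
   directed intersection of the d ⊇ c with s ∈ g d shows that s ∈ g c as soon
   as s ∈ g (S \ {t}) for every t ∉ c.  If s ∈ D_I(c) and t ∉ c, then
   t ∉ P_i(s) for some i ∈ I, so s ∈ K_i(S \ {t}) ⊆ g(S \ {t}). *)

Section BoxOperators.
Variable S : Type.

Definition box (R : S -> set S) (e : set S) : set S := [set s | R s `<=` e].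

Lemma space_function_box (R : S -> set S) : space_function (box R).
Proof.
split; [|split].
- move=> D _; apply/seteqP; split=> s /=.
  + by move=> Rs_c d Dd t Rst; exact: Rs_c t Rst d Dd.
  + by move=> Rs_D t Rst d Dd; exact: Rs_D d Dd t Rst.
- move=> a b; apply/seteqP; split=> s /=.
  + by move=> Rs_ab; split=> t /Rs_ab [].
  + by move=> [Rs_a Rs_b] t Rst; split; [exact: Rs_a | exact: Rs_b].
- by apply/seteqP; split=> s // _ t _.
Qed.

End BoxOperators.

Section SpaceFunctions.
Variables (S : Type) (g : set S -> set S).
Hypothesis g_space : space_function g.

Lemma directed_space_supersets (c : set S) (s : S) :
  directed [set d | c `<=` d /\ g d s].
Proof.
case: g_space => _ [gI gT]; split.
  by exists setT; split=> //; rewrite gT.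
move=> a b [ca ga] [cb gb]; exists (a `&` b).
  by split=> [t ct | ]; [split; [exact: ca | exact: cb] | rewrite gI].
by split=> t [].
Qed.

Lemma space_function_setC1 (c : set S) (s : S) :
  (forall t, ~ c t -> g [set~ t] s) -> g c s.
Proof.
move=> g_cosingletons.
set D := [set d | c `<=` d /\ g d s].
have bigcapD : \bigcap_(d in D) d = c.
  apply/seteqP; split=> [t Dt | t ct d [cd _]]; last exact: cd.
  apply: contrapT => nct.
  have cC1 : c `<=` [set~ t] by move=> x cx xt; apply: nct; rewrite -xt.
  by apply: (Dt [set~ t]) => //; split; [exact: cC1 | exact: g_cosingletons].
case: g_space => gD _.
by rewrite -bigcapD (gD D (directed_space_supersets c s)) => d [].
Qed.

End SpaceFunctions.

Section DistributedKnowledge.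
Variables (S : Type) (n : nat) (P : 'I_n -> S -> set S) (I : set 'I_n).

Lemma Dop_box : Dop P I = box (fun s => \bigcap_(i in I) P i s).
Proof. by []. Qed.

Lemma Kop_sub_Dop (i : 'I_n) (c : set S) : I i -> Kop (P i) c `<=` Dop P I c.
Proof. by move=> Ii s Pis_c t Pst; apply: Pis_c; exact: Pst i Ii. Qed.

Lemma Dop_sub_space_function (g : set S -> set S) :
  space_function g -> (forall c i, I i -> Kop (P i) c `<=` g c) ->
  forall c, Dop P I c `<=` g c.
Proof.
move=> g_space Kop_sub_g c s Ps_c; apply: (space_function_setC1 g_space) => t nct.
have [i Ii nPist] : exists2 i, I i & ~ P i s t.
  apply: contrapT => /forall2NP Pst; apply: nct; apply: Ps_c => i Ii.
  by case: (Pst i) => // /contrapT.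
by apply: (Kop_sub_g _ i Ii) => x Pisx xt; apply: nPist; rewrite -xt.
Qed.

End DistributedKnowledge.

Theorem mainTheorem8 (S : Type) (n : nat) (P : 'I_n -> S -> set S)
  (HP : forall i, is_partition_fun (P i)) (I : set 'I_n) :
  is_distributed_space (fun i => Kop (P i)) I (Dop P I).
Proof.
split.
- by rewrite Dop_box; exact: space_function_box.
- by move=> c i Ii; exact: Kop_sub_Dop.
- by move=> g g_space Kop_sub_g; exact: Dop_sub_space_function.
Qed.
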